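(* Consider the problem $\min_{w\in W}f(w)$, $f(w)=\mu(w)+\sum_{s\in N}\eta_s(w_{(s)})$, under the assumptions of the context, and additionally assume that the gradient $\mu'$ is uniformly continuous on $W$. Let Method (CPL) (described in the context) be applied with any $z^0\in W$, $\beta,\theta\in(0,1)$ and any sequence $\delta_l>0$ decreasing to $0$. Then: (i) for each outer iteration $l$, the number of inner iterations performed before the restart producing $z^l$ is finite; (ii) the sequence $\{z^l\}$ has limit points, every limit point of $\{z^l\}$ is a solution of $\min_{w\in W}f(w)$, and $\lim_{l\to\infty}f(z^l)=f^*$, where $f^*=\min_{w\in W}f(w)$.
   Context: Let $N=\{1,\dots,n\}$ and $\mathbb{R}^m=\prod_{s\in N}\mathbb{R}^{m_s}$, writing $w=(w_{(s)})_{s\in N}$. Let $W=\prod_{s\in N}W_s$ where each $W_s\subset\mathbb{R}^{m_s}$ is nonempty, convex and compact. Let $\mu:\mathbb{R}^m\to\mathbb{R}$ be convex and continuously differentiable, and each $\eta_s:\mathbb{R}^{m_s}\to\mathbb{R}$ convex; $\eta(w)=\sum_s\eta_s(w_{(s)})$, $f=\mu+\eta$. For $w\in W$ and $s\in N$ define $V_s(w)$ as the solution set of $\min_{v_{(s)}\in W_s}\{\langle v_{(s)},\partial\mu(w)/\partial w_{(s)}\rangle+\eta_s(v_{(s)})\}$ and the partial gap $$\varphi_s(w)=\max_{v_{(s)}\in W_s}\Big\{\Big\langle w_{(s)}-v_{(s)},\frac{\partial\mu(w)}{\partial w_{(s)}}\Big\rangle+\eta_s(w_{(s)})-\eta_s(v_{(s)})\Big\}.$$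 Method (CPL): Choose $z^0\in W$, $\beta,\theta\in(0,1)$, a sequence $\delta_l\searrow 0$; set $l=1$. Step 0: set $k=0$, $d=0$, $s=1$, $w^0=z^{l-1}$. Step 1: find $v_{(s)}\in V_s(w^k)$ and compute $\varphi_s(w^k)$. If $\varphi_s(w^k)\ge\delta_l$, define $p^k$ by $p^k_{(s)}=v_{(s)}-w^k_{(s)}$ and $p^k_{(i)}=0$ for $i\ne s$, and go to Step 4. Step 2: set $d=d+1$. If $d=n$ (i.e. $n$ consecutive components have been checked with gap below $\delta_l$), set $z^l=w^k$, $l=l+1$ and go to Step 0 (restart). Step 3: set $s=1$ if $s=n$, else $s=s+1$; go to Step 1. Step 4: let $j$ be the smallest nonnegative integer with $f(w^k+\theta^jp^k)\le f(w^k)-\beta\theta^j\varphi_s(w^k)$; set $\lambda_k=\theta^j$, $w^{k+1}=w^k+\lambda_kp^k$, $k=k+1$, $d=0$; set $s=1$ if $s=n$, else $s=s+1$; go to Step 1. *)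

(* Conventions: N = {1,...,n} is represented by 'I_n (block 1 is
   the ordinal 0); R^{m_s} is 'I_(m s) -> R; R^m = prod_s R^{m_s} is the dependent
   function type  forall s : 'I_n, 'I_(m s) -> R. *)
From Stdlib Require Import Reals.
From mathcomp Require Import ssreflect ssrfun ssrbool eqtype ssrnat seq fintype bigop.
Set Implicit Arguments. Unset Strict Implicit. Unset Printing Implicit Defensive.
Local Open Scope R_scope.

Definition bvec (k : nat) := 'I_k -> R.
Definition bdot (k : nat) (x y : bvec k) : R := \big[Rplus/R0]_(j < k) (x j * y j).
Definition bnorm (k : nat) (x : bvec k) : R := sqrt (bdot x x).

Definition bconvex_set (k : nat) (A : bvec k -> Prop) : Prop :=
  forall x y t, A x -> A y -> 0 <= t <= 1 -> A (fun j => t * x j + (1 - t) * y j).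

Definition bcompact (k : nat) (A : bvec k -> Prop) : Prop :=
  forall u : nat -> bvec k, (forall i, A (u i)) ->
  exists (phi : nat -> nat) (x : bvec k),
    (forall i, (phi i < phi i.+1)%N) /\ A x /\
    (forall eps, 0 < eps -> exists N, forall i, (N <= i)%N ->
        bnorm (fun j => u (phi i) j - x j) < eps).

Definition bconvex_fun (k : nat) (F : bvec k -> R) : Prop :=
  forall x y t, 0 <= t <= 1 ->
    F (fun j => t * x j + (1 - t) * y j) <= t * F x + (1 - t) * F y.

Definition vec (n : nat) (m : 'I_n -> nat) := forall s : 'I_n, bvec (m s).
Arguments vec : clear implicits.
Definition vdot n m (x y : vec n m) : R := \big[Rplus/R0]_(s < n) bdot (x s) (y s).
Definition vnorm n m (x : vec n m) : R := sqrt (vdot x x).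
Definition vdiff n m (x y : vec n m) : vec n m := fun s j => x s j - y s j.

Definition vconvex_fun n m (F : vec n m -> R) : Prop :=
  forall (x y : vec n m) t, 0 <= t <= 1 ->
    F (fun s j => t * x s j + (1 - t) * y s j) <= t * F x + (1 - t) * F y.

Definition has_gradient n m (mu : vec n m -> R) (g : vec n m -> vec n m) : Prop :=
  forall x : vec n m, forall eps, 0 < eps -> exists delta, 0 < delta /\
    forall h : vec n m, vnorm h < delta ->
      Rabs (mu (fun s j => x s j + h s j) - mu x - vdot (g x) h) <= eps * vnorm h.

Definition vcontinuous n m (g : vec n m -> vec n m) : Prop :=
  forall x : vec n m, forall eps, 0 < eps -> exists delta, 0 < delta /\
    forall y, vnorm (vdiff y x) < delta -> vnorm (vdiff (g y) (g x)) < eps.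

Definition vunif_cont_on n m (A : vec n m -> Prop) (g : vec n m -> vec n m) : Prop :=
  forall eps, 0 < eps -> exists delta, 0 < delta /\
    forall x y, A x -> A y -> vnorm (vdiff y x) < delta -> vnorm (vdiff (g y) (g x)) < eps.

Definition inW n m (W : forall s : 'I_n, bvec (m s) -> Prop) (w : vec n m) : Prop :=
  forall s, W s (w s).

Definition fobj n m (mu : vec n m -> R) (eta : forall s : 'I_n, bvec (m s) -> R)
  (w : vec n m) : R := mu w + \big[Rplus/R0]_(s < n) eta s (w s).

Definition is_max (T : Type) (A : T -> Prop) (F : T -> R) (M : R) : Prop :=
  (exists v, A v /\ F v = M) /\ (forall v, A v -> F v <= M).
Definition is_min (T : Type) (A : T -> Prop) (F : T -> R) (M : R) : Prop :=
  (exists v, A v /\ F v = M) /\ (forall v, A v -> M <= F v).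

(* the function maximized in the partial gap phi_s(w); g w s = d mu(w) / d w_(s) *)
Definition gapfun n m (g : vec n m -> vec n m) (eta : forall s : 'I_n, bvec (m s) -> R)
  (w : vec n m) (s : 'I_n) (v : bvec (m s)) : R :=
  bdot (fun j => w s j - v j) (g w s) + eta s (w s) - eta s v.
Arguments gapfun {n m} g eta w s v.

Definition in_V n m (W : forall s : 'I_n, bvec (m s) -> Prop) (g : vec n m -> vec n m)
  (eta : forall s : 'I_n, bvec (m s) -> R) (w : vec n m) (s : 'I_n) (v : bvec (m s)) : Prop :=
  W s v /\ forall u, W s u -> bdot v (g w s) + eta s v <= bdot u (g w s) + eta s u.
Arguments in_V {n m} W g eta w s v.

(* One transition of method (CPL) between states (w^k, s, d, l) and (w', s', d', l').
   First alternative: Step 1 with phi_s(w^k) >= delta_l, followed by Step 4.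
   Second alternative: Step 1 with phi_s(w^k) < delta_l, followed by Step 2 and either
   a restart (Step 0 of outer iteration l+1, z^l = w^k, w^0 = z^l) or Step 3.
   Block s = 1 is the ordinal 0 (Ordinal hn); "s := 1 if s = n else s+1" is ordS. *)
Definition cpl_step n (hn : (0 < n)%N) (m : 'I_n -> nat)
  (W : forall s : 'I_n, bvec (m s) -> Prop) (mu : vec n m -> R) (g : vec n m -> vec n m)
  (eta : forall s : 'I_n, bvec (m s) -> R) (beta theta : R) (delta : nat -> R)
  (w : vec n m) (s : 'I_n) (d l : nat)
  (w' : vec n m) (s' : 'I_n) (d' l' : nat) : Prop :=
  let f := fobj mu eta in
  (exists (v : bvec (m s)) (phi : R) (p : vec n m) (j : nat),
      in_V W g eta w s v /\
      is_max (W s) (gapfun g eta w s) phi /\ delta l <= phi /\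
      p s = (fun i => v i - w s i) /\ (forall i, i <> s -> p i = (fun _ => 0)) /\
      f (fun i k => w i k + theta ^ j * p i k) <= f w - beta * theta ^ j * phi /\
      (forall j', (j' < j)%N ->
         f w - beta * theta ^ j' * phi < f (fun i k => w i k + theta ^ j' * p i k)) /\
      w' = (fun i k => w i k + theta ^ j * p i k) /\
      s' = ordS s /\ d' = 0%N /\ l' = l)
  \/
  (exists phi : R,
      is_max (W s) (gapfun g eta w s) phi /\ phi < delta l /\
      ((d.+1 = n /\ w' = w /\ s' = Ordinal hn /\ d' = 0%N /\ l' = l.+1) \/
       (d.+1 <> n /\ w' = w /\ s' = ordS s /\ d' = d.+1 /\ l' = l))).

Definition cluster_point n m (z : nat -> vec n m) (zb : vec n m) : Prop :=
  forall eps, 0 < eps -> forall N, exists k, (N <= k)%N /\ vnorm (vdiff (z k) zb) < eps.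

(* Uniform continuity of the gradient on the compact set W gives, for every delta > 0, one
   step size that passes the Armijo test at every point and block with partial gap at least
   delta; an accepted step therefore decreases f by a fixed amount. As f is bounded below on
   W and at most n - 1 idle checks separate two descent steps, every outer iteration ends
   with a restart. At a restart all partial gaps are below delta_l, and convexity turns this
   into f(z^l) - f(w) <= n delta_l for every w in W. Compactness gives limit points, which
   are optimal by lower semicontinuity of f, and f(z^l) -> f^* since delta_l -> 0. *)

From Stdlib Require Import Reals Psatz Wf_nat.
From Stdlib Require Import Classical ClassicalEpsilon ChoiceFacts FunctionalExtensionality.
From HB Require Import structures.
From mathcomp Require Import ssreflect ssrfun ssrbool eqtype ssrnat fintype bigop div.
Set Implicit Arguments. Unset Strict Implicit.
Local Open Scope R_scope.

HB.instance Definition _ := Monoid.isComLaw.Build R R0 Rplus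
  (fun a b c => esym (Rplus_assoc a b c)) Rplus_comm Rplus_0_l.

Local Notation "\sum_ ( i < n ) F" := (\big[Rplus/R0]_(i < n) F) : R_scope.

Lemma Rabs_le_bounds x a : Rabs x <= a -> - a <= x <= a.
Proof. by move=> h; have := Rle_abs x; have := Rle_abs (- x); rewrite Rabs_Ropp; lra. Qed.

Section RealSums.
Variable N : nat.
Implicit Types F G : 'I_N -> R.

Lemma sumR_le F G : (forall i, F i <= G i) -> \sum_(i < N) F i <= \sum_(i < N) G i.
Proof. by move=> H; apply: (big_ind2 (fun a b => a <= b)) => // *; lra. Qed.

Lemma sumR_ge0 F : (forall i, 0 <= F i) -> 0 <= \sum_(i < N) F i.
Proof. by move=> H; apply: (big_ind (fun a => 0 <= a)) => // *; lra. Qed.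

Lemma sumR_scale c F : \sum_(i < N) (c * F i) = c * \sum_(i < N) F i.
Proof. by apply: (big_rec2 (fun a b => a = c * b)) => [|i a b _ ->]; ring. Qed.

Lemma sumR_add F G : \sum_(i < N) (F i + G i) = \sum_(i < N) F i + \sum_(i < N) G i.
Proof. exact: big_split. Qed.

Lemma sumR_sub F G : \sum_(i < N) (F i - G i) = \sum_(i < N) F i - \sum_(i < N) G i.
Proof.
rewrite (eq_bigr (fun i => F i + -1 * G i)); last by move=> i _; ring.
by rewrite sumR_add sumR_scale; ring.
Qed.

Lemma sumR_term_le F i : (forall j, 0 <= F j) -> F i <= \sum_(j < N) F j.
Proof.
move=> H; rewrite (bigD1 i) //= -{1}[F i]Rplus_0_r; apply: Rplus_le_compat_l.
by apply: (big_ind (fun a => 0 <= a)) => // *; lra.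
Qed.

Lemma sumR_single F i : (forall j, j <> i -> F j = 0) -> \sum_(j < N) F j = F i.
Proof. by move=> H; rewrite (bigD1 i) //= big1 ?Rplus_0_r // => j /eqP; apply: H. Qed.

Lemma sumR_const c : \sum_(i < N) c = INR N * c.
Proof.
rewrite big_const_ord.
by elim: (N) => [|k IH]; [rewrite /=; ring | rewrite iterS IH S_INR; ring].
Qed.

Lemma sumR_le_const F c : (forall i, F i <= c) -> \sum_(i < N) F i <= INR N * c.
Proof. by move=> H; rewrite -sumR_const; apply: sumR_le. Qed.

Lemma pos_lower_bound (r : 'I_N -> R) : (forall i, 0 < r i) ->
  exists r0, 0 < r0 /\ forall i, r0 <= r i.
Proof.
move=> hr; have hS := @sumR_ge0 (fun i => / r i) (fun i => Rlt_le _ _ (Rinv_0_lt_compat _ (hr i))).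
exists (/ (1 + \sum_(i < N) / r i)); split; first by apply: Rinv_0_lt_compat; lra.
move=> i; rewrite -(Rinv_inv (r i)); apply: Rinv_le_contravar.
  exact: Rinv_0_lt_compat (hr i).
have := @sumR_term_le (fun i => / r i) i (fun j => Rlt_le _ _ (Rinv_0_lt_compat _ (hr j))); lra.
Qed.

End RealSums.

Section BlockEuclid.
Variable k : nat.
Implicit Types x y z : bvec k.

Definition bdist2 x y : R := bdot (fun j => x j - y j) (fun j => x j - y j).

Lemma bdot_ge0 x : 0 <= bdot x x.
Proof. by apply: sumR_ge0 => j; apply: Rle_0_sqr. Qed.

Lemma bdot_sym x y : bdot x y = bdot y x.
Proof. by apply: eq_bigr => j _; ring. Qed.

Lemma bdot_linr x y z a b : bdot x (fun j => a * y j + b * z j) = a * bdot x y + b * bdot x z.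
Proof. by rewrite /bdot -!sumR_scale -sumR_add; apply: eq_bigr => j _; ring. Qed.

Lemma bdot_subl x y z : bdot (fun j => x j - y j) z = bdot x z - bdot y z.
Proof. by rewrite /bdot -sumR_sub; apply: eq_bigr => j _; ring. Qed.

Lemma bdot_young x y l : 0 < l -> bdot x y <= (l * bdot x x + bdot y y / l) / 2.
Proof.
move=> hl; have hl' : 0 < / l by apply: Rinv_0_lt_compat.
apply: Rle_trans (sumR_le (G := fun j => / 2 * (l * (x j * x j)) + / 2 * / l * (y j * y j)) _) _.
  move=> j; have := pow2_ge_0 (l * x j - y j); have : l * / l = 1 by field; lra.
  nra.
by right; rewrite sumR_add !sumR_scale -/(bdot x x) -/(bdot y y) /Rdiv; ring.
Qed.

Lemma bdot_coord_le x j : x j * x j <= bdot x x.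
Proof. by apply: (sumR_term_le (F := fun j => x j * x j)) => i; apply: Rle_0_sqr. Qed.

Lemma bnorm_lt_iff x e : 0 < e -> bnorm x < e <-> bdot x x < e * e.
Proof.
move=> he; have hx := bdot_ge0 x; rewrite /bnorm; split => h.
- have := sqrt_sqrt _ hx; have := sqrt_pos (bdot x x); nra.
- by rewrite -(sqrt_square e); [apply: sqrt_lt_1_alt; lra | lra].
Qed.

Lemma bdist2_ge0 x y : 0 <= bdist2 x y.
Proof. exact: bdot_ge0. Qed.

Lemma bdist2_sym x y : bdist2 x y = bdist2 y x.
Proof. by apply: eq_bigr => j _; ring. Qed.

Lemma bdist2_0r x : bdist2 x (fun _ => 0) = bdot x x.
Proof. by apply: eq_bigr => j _; ring. Qed.

Lemma bdist2_triangle x y z : bdist2 x z <= 2 * bdist2 x y + 2 * bdist2 y z.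
Proof.
rewrite /bdist2 /bdot -!sumR_scale -sumR_add; apply: sumR_le => j.
have := Rle_0_sqr (x j - 2 * y j + z j); rewrite /Rsqr; nra.
Qed.

Lemma bdist2_le_sq x y : bdist2 x y <= 2 * bdot x x + 2 * bdot y y.
Proof.
have := bdist2_triangle x (fun _ => 0) y.
by rewrite bdist2_0r (bdist2_sym (fun _ => 0)) bdist2_0r.
Qed.

Lemma bdist2_eq0 x y : bdist2 x y = 0 -> x = y.
Proof.
move=> h; apply: functional_extensionality => j.
have := bdot_coord_le (fun j => x j - y j) j; rewrite -/(bdist2 x y) h.
have := Rle_0_sqr (x j - y j); rewrite /Rsqr; nra.
Qed.

End BlockEuclid.

Section ProductEuclid.
Variables (n : nat) (m : 'I_n -> nat).
Implicit Types x y z : vec n m.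

Lemma vdot_ge0 x : 0 <= vdot x x.
Proof. by apply: sumR_ge0 => s; apply: bdot_ge0. Qed.

Lemma vdot_sym x y : vdot x y = vdot y x.
Proof. by apply: eq_bigr => s _; apply: bdot_sym. Qed.

Lemma vdot_ext x y x' y' : (forall s j, x s j = x' s j) -> (forall s j, y s j = y' s j) ->
  vdot x y = vdot x' y'.
Proof. by move=> hx hy; apply: eq_bigr => s _; apply: eq_bigr => j _; rewrite hx hy. Qed.

Lemma vdot_linr x y z a b :
  vdot x (fun s j => a * y s j + b * z s j) = a * vdot x y + b * vdot x z.
Proof. by rewrite /vdot -!sumR_scale -sumR_add; apply: eq_bigr => s _; apply: bdot_linr. Qed.

Lemma vdot_scaler x y t : vdot x (fun s j => t * y s j) = t * vdot x y.
Proof.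
rewrite (@vdot_ext x _ x (fun s j => t * y s j + 0 * y s j)) // => [|s j]; last ring.
by rewrite vdot_linr; ring.
Qed.

Lemma vdot_young x y l : 0 < l -> vdot x y <= (l * vdot x x + vdot y y / l) / 2.
Proof.
move=> hl; apply: Rle_trans (sumR_le (G := fun s =>
  / 2 * (l * bdot (x s) (x s)) + / 2 * / l * bdot (y s) (y s)) _) _.
  by move=> s; have := bdot_young (x s) (y s) hl; rewrite /Rdiv; lra.
by right; rewrite sumR_add !sumR_scale -/(vdot x x) -/(vdot y y) /Rdiv; ring.
Qed.

Lemma vdot_le_of_sq_le x y c P : 0 < c -> 0 < P -> vdot x x <= c * c / P -> vdot y y <= P ->
  vdot x y <= c.
Proof.
move=> hc hP hx hy; have hl : 0 < P / c by apply: Rdiv_lt_0_compat.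
apply: Rle_trans (vdot_young x y hl) _.
have e1 : P / c * (c * c / P) = c by field; lra.
have e2 : P / (P / c) = c by field; lra.
have := Rmult_le_compat_l _ _ _ (Rlt_le _ _ hl) hx.
have : vdot y y / (P / c) <= P / (P / c).
  by rewrite /Rdiv; apply: Rmult_le_compat_r; [left; apply: Rinv_0_lt_compat|].
lra.
Qed.

Lemma vdot_block_le x s : bdot (x s) (x s) <= vdot x x.
Proof. by apply: (sumR_term_le (F := fun s => bdot (x s) (x s))) => i; apply: bdot_ge0. Qed.

Lemma vdot_single x y s : (forall i, i <> s -> y i = fun _ => 0) -> vdot x y = bdot (x s) (y s).
Proof.
move=> hy; rewrite /vdot (sumR_single (F := fun i => bdot (x i) (y i)) (i := s)) // => i /hy ->.
by rewrite /bdot big1 // => j _; ring.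
Qed.

Lemma vnorm_lt_iff x e : 0 < e -> vnorm x < e <-> vdot x x < e * e.
Proof.
move=> he; have hx := vdot_ge0 x; rewrite /vnorm; split => h.
- have := sqrt_sqrt _ hx; have := sqrt_pos (vdot x x); nra.
- by rewrite -(sqrt_square e); [apply: sqrt_lt_1_alt; lra | lra].
Qed.

Lemma vnorm_scale x t : 0 <= t -> vnorm (fun s j => t * x s j) = t * vnorm x.
Proof.
move=> ht; rewrite /vnorm vdot_scaler vdot_sym vdot_scaler -Rmult_assoc sqrt_mult_alt.
  by rewrite sqrt_square.
nra.
Qed.

End ProductEuclid.

Section ConvexBlock.
Variables (k : nat) (F : bvec k -> R).
Hypothesis convF : bconvex_fun F.

Lemma bconvex_funP a b c t : 0 <= t <= 1 -> (forall j, c j = t * a j + (1 - t) * b j) ->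
  F c <= t * F a + (1 - t) * F b.
Proof. by move=> ht hc; rewrite (functional_extensionality _ _ hc); apply: convF. Qed.

Lemma bconvex_le_Rmax a b c t : 0 <= t <= 1 -> (forall j, c j = t * a j + (1 - t) * b j) ->
  F c <= Rmax (F a) (F b).
Proof.
move=> ht hc; have := bconvex_funP ht hc.
by have := Rmax_l (F a) (F b); have := Rmax_r (F a) (F b); nra.
Qed.

Lemma bconvex_avg_le (a : nat -> bvec k) N M : (0 < N)%N ->
  (forall i, (i < N)%N -> F (a i) <= M) -> F (fun j => (\sum_(i < N) a i j) / INR N) <= M.
Proof.
elim: N => [//|N IH] _ ha; case: (posnP N) => [N0|Npos].
  have -> : (fun j => (\sum_(i < N.+1) a i j) / INR N.+1) = a 0%N.
    by apply: functional_extensionality => j; rewrite N0 big_ord1 /=; field.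
  exact: ha.
have hN : 0 < INR N by apply: lt_0_INR; apply/ltP.
have ht : 0 <= INR N / INR N.+1 <= 1.
  rewrite S_INR; split; first by apply: Rle_mult_inv_pos; lra.
  by apply: (Rmult_le_reg_r (INR N + 1)); [lra | rewrite /Rdiv Rmult_assoc Rinv_l; lra].
have hlast := ha N (ltnSn N).
have havg := IH Npos (fun i hi => ha i (ltnW hi)).
apply: Rle_trans (bconvex_funP (a := fun j => (\sum_(i < N) a i j) / INR N) (b := a N) ht _) _.
  by move=> j; rewrite big_ord_recr S_INR /=; set S := \sum_(i < N) _; field; lra.
have := Rmult_le_compat_l _ _ _ ht.1 havg.
have := Rmult_le_compat_l (1 - INR N / INR N.+1) _ _ (ltac:(lra)) hlast.
lra.
Qed.

(* Every point x + h of the cube x + [-1,1]^k is the average of the k points x + k h_i e_i,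
   each of which lies on the segment [x - k e_i, x + k e_i]. *)
Lemma bconvex_box_bound x : (0 < k)%N ->
  exists M, forall h : bvec k, (forall j, Rabs (h j) <= 1) -> F (fun j => x j + h j) <= M.
Proof.
move=> kpos; have hk : 0 < INR k by apply: lt_0_INR; apply/ltP.
pose e (i : 'I_k) (t : R) : bvec k := fun j => x j + (if j == i then t else 0).
pose Mi i := Rabs (F (e i (INR k))) + Rabs (F (e i (- INR k))).
have Mi_ge0 i : 0 <= Mi i.
  by have := Rabs_pos (F (e i (INR k))); have := Rabs_pos (F (e i (- INR k))); rewrite /Mi; lra.
exists (\sum_(i < k) Mi i) => h hh.
pose a (i : nat) : bvec k := fun j => x j + (if nat_of_ord j == i then INR k * h j else 0).
have -> : (fun j => x j + h j) = (fun j => (\sum_(i < k) a i j) / INR k).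
  apply: functional_extensionality => j; rewrite /a sumR_add sumR_const.
  rewrite (@sumR_single _ (fun i : 'I_k => if nat_of_ord j == i then INR k * h j else 0) j).
    by rewrite eqxx; field; lra.
  by move=> i hij; rewrite ifF //; apply/negbTE/eqP => /val_inj eji; apply: hij.
apply: bconvex_avg_le => // i hi; set oi := Ordinal hi.
apply: Rle_trans (sumR_term_le oi Mi_ge0).
apply: Rle_trans (_ : _ <= Rmax (F (e oi (INR k))) (F (e oi (- INR k)))) _.
  have [hl hu] := Rabs_le_bounds (hh oi).
  apply: (bconvex_le_Rmax (t := (1 + h oi) / 2)); first lra.
  move=> j; rewrite /a /e -[j == oi]val_eqE /=.
  by case: eqP => [ji|_]; [have -> : j = oi by apply: val_inj | idtac]; field.
have := Rle_abs (F (e oi (INR k))); have := Rle_abs (F (e oi (- INR k))).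
have := Rabs_pos (F (e oi (INR k))); have := Rabs_pos (F (e oi (- INR k))).
by rewrite /Mi; move=> *; apply: Rmax_lub; lra.
Qed.

Lemma bconvex_local_upper x M d c del :
  (forall h : bvec k, (forall j, Rabs (h j) <= 1) -> F (fun j => x j + h j) <= M) ->
  0 < del <= 1 -> (forall j, Rabs (d j) <= del) -> (forall j, c j = x j + d j) ->
  F c <= del * M + (1 - del) * F x.
Proof.
move=> HM hdel hd hc.
have hM : F (fun j => x j + d j / del) <= M.
  apply: HM => j; have [hl hu] := Rabs_le_bounds (hd j).
  have hi : del * / del = 1 by field; lra.
  have hp : 0 < / del by apply: Rinv_0_lt_compat; lra.
  by apply: Rabs_le; rewrite /Rdiv; split; nra.
have : F c <= del * F (fun j => x j + d j / del) + (1 - del) * F x.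
  by apply: bconvex_funP => [|j]; [lra | rewrite hc; field; lra].
by have := Rmult_le_compat_l del _ _ (ltac:(lra)) hM; lra.
Qed.

(* The upper bound on the cube controls F near x from both sides, using the point
   reflected through x. *)
Lemma bconvex_continuous x eps : 0 < eps ->
  exists r, 0 < r /\ forall y, bdist2 y x < r -> Rabs (F y - F x) < eps.
Proof.
move=> he; case: (posnP k) => [k0|kpos].
  exists 1; split=> [|y _]; first lra.
  have -> : y = x by apply: functional_extensionality => -[j hj]; exfalso; move: hj; rewrite k0.
  by rewrite Rminus_diag Rabs_R0.
have [M HM] := bconvex_box_bound x kpos.
have HMx : F x <= M.
  have := HM (fun _ => 0) (fun j => ltac:(rewrite Rabs_R0; lra)).
  by rewrite (functional_extensionality _ x (fun j => Rplus_0_r (x j))).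
set del := Rmin 1 (eps / (2 * (M - F x + 1))).
have hdel : 0 < del <= 1.
  by split; [apply: Rmin_pos; [lra | apply: Rdiv_lt_0_compat; lra] | apply: Rmin_l].
have hdel_eps : del * (M - F x) < eps.
  have := Rmin_r 1 (eps / (2 * (M - F x + 1))); rewrite -/del => hd.
  apply: Rle_lt_trans (Rmult_le_compat_r (M - F x) _ _ (ltac:(lra)) hd) _.
  have hq : eps / (2 * (M - F x + 1)) * (2 * (M - F x + 1)) = eps by field; lra.
  have : 0 < eps / (2 * (M - F x + 1)) by apply: Rdiv_lt_0_compat; lra.
  nra.
exists (del * del); split=> [|y hy]; first nra.
have hd j : Rabs (y j - x j) <= del.
  apply: Rlt_le; rewrite -(Rabs_right del); last lra.
  apply: Rsqr_lt_abs_0; rewrite /Rsqr.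
  by have := bdot_coord_le (fun j => y j - x j) j; rewrite /= -/(bdist2 y x); lra.
have Hy : F y <= del * M + (1 - del) * F x.
  by apply: (bconvex_local_upper (d := fun j => y j - x j) HM hdel hd) => j; ring.
have Hr : F (fun j => x j - (y j - x j)) <= del * M + (1 - del) * F x.
  apply: (bconvex_local_upper (d := fun j => x j - y j) HM hdel) => j; last ring.
  by rewrite -Rabs_Ropp Ropp_minus_distr; apply: hd.
have Hx : F x <= / 2 * F y + (1 - / 2) * F (fun j => x j - (y j - x j)).
  by apply: bconvex_funP => [|j]; [lra | field].
by apply: Rabs_def1; nra.
Qed.

End ConvexBlock.

Lemma bconvex_fun_add_linear k (F : bvec k -> R) a :
  bconvex_fun F -> bconvex_fun (fun v => bdot v a + F v).
Proof.
move=> convF x y t ht; have := convF x y t ht.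
by rewrite (bdot_sym _ a) bdot_linr (bdot_sym a) (bdot_sym a); lra.
Qed.

Lemma strict_incr_ge (phi : nat -> nat) : (forall i, (phi i < phi i.+1)%N) ->
  forall i, (i <= phi i)%N.
Proof. by move=> h; elim=> [|i IH] //; exact: leq_ltn_trans IH (h i). Qed.

Lemma inv_INR_S_lt e : 0 < e -> exists N : nat, forall i, (N <= i)%N -> / INR i.+1 < e.
Proof.
move=> he; have [N HN] := INR_unbounded (/ e); exists N => i hi.
have hNi : INR N <= INR i by apply: le_INR; apply/leP.
rewrite -(Rinv_inv e); apply: Rinv_lt_contravar.
  by apply: Rmult_lt_0_compat; [apply: Rinv_0_lt_compat | apply: lt_0_INR; lia].
by rewrite S_INR; lra.
Qed.

Definition bconverges k (u : nat -> bvec k) (x : bvec k) : Prop :=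
  forall eps, 0 < eps -> exists N, forall i, (N <= i)%N -> bdist2 (u i) x < eps.

Definition bcontinuous_on k (A : bvec k -> Prop) (F : bvec k -> R) : Prop :=
  forall x, A x -> forall eps, 0 < eps -> exists r, 0 < r /\
    forall y, A y -> bdist2 y x < r -> Rabs (F y - F x) < eps.

Lemma bconvex_continuous_on k (A : bvec k -> Prop) F : bconvex_fun F -> bcontinuous_on A F.
Proof.
move=> convF x _ eps he; have [r [hr Hr]] := bconvex_continuous convF x he.
by exists r; split=> // y _; apply: Hr.
Qed.

Section Compact.
Variables (k : nat) (A : bvec k -> Prop).
Hypothesis cA : bcompact A.

Lemma bcompact_cvg_subseq (u : nat -> bvec k) : (forall i, A (u i)) ->
  exists phi x, (forall i, (phi i < phi i.+1)%N) /\ A x /\ bconverges (fun i => u (phi i)) x.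
Proof.
move=> hu; have [phi [x [hphi [hx hlim]]]] := cA hu.
exists phi, x; split=> //; split=> // eps he.
have [N HN] := hlim (sqrt eps) (sqrt_lt_R0 _ he); exists N => i /HN.
by rewrite bnorm_lt_iff ?sqrt_sqrt //; [lra | exact: sqrt_lt_R0].
Qed.

Lemma bcompact_bounded : exists B, 0 <= B /\ forall x, A x -> bdot x x <= B.
Proof.
apply: NNPP => hnot.
have [u hu] : exists u : nat -> bvec k, forall i, A (u i) /\ INR i < bdot (u i) (u i).
  apply: (choice (fun i x => A x /\ INR i < bdot x x)) => i.
  apply: NNPP => hi; apply: hnot; exists (INR i); split; first exact: pos_INR.
  by move=> x hx; apply: Rnot_lt_le => hlt; apply: hi; exists x.
have [phi [x [hphi [_ hlim]]]] := bcompact_cvg_subseq (fun i => proj1 (hu i)).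
have [N HN] := hlim 1 Rlt_0_1; have [N' HN'] := INR_unbounded (2 + 2 * bdot x x).
set i := maxn N N'.
have := HN i (leq_maxl _ _); have := proj2 (hu (phi i)).
have := bdist2_triangle (u (phi i)) x (fun _ => 0); rewrite !bdist2_0r.
have : INR N' <= INR (phi i).
  by apply: le_INR; apply/leP; apply: leq_trans (leq_maxr N N') (strict_incr_ge hphi i).
lra.
Qed.

Lemma bcompact_closed x : (forall eps, 0 < eps -> exists y, A y /\ bdist2 y x < eps) -> A x.
Proof.
move=> hx.
have [u hu] : exists u : nat -> bvec k, forall i, A (u i) /\ bdist2 (u i) x < / INR i.+1.
  apply: (choice (fun i y => A y /\ bdist2 y x < / INR i.+1)) => i.
  by apply: hx; apply: Rinv_0_lt_compat; apply: lt_0_INR; lia.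
have [phi [y [hphi [hy hlim]]]] := bcompact_cvg_subseq (fun i => proj1 (hu i)).
suff -> : x = y by [].
apply: bdist2_eq0; apply: Rle_antisym; last exact: bdist2_ge0.
apply: le_epsilon => e he; rewrite Rplus_0_l.
have [N HN] := hlim (e / 4) (ltac:(lra)); have [N' HN'] := inv_INR_S_lt (ltac:(lra) : 0 < e / 4).
set i := maxn N N'.
have := HN i (leq_maxl _ _); have := proj2 (hu (phi i)).
have := HN' (phi i) (leq_trans (leq_maxr N N') (strict_incr_ge hphi i)).
have := bdist2_triangle x (u (phi i)) y; rewrite (bdist2_sym x (u (phi i))).
lra.
Qed.

Lemma bcompact_bounded_below F : bcontinuous_on A F -> exists L, forall y, A y -> L <= F y.
Proof.
move=> cF; apply: NNPP => hnot.
have [u hu] : exists u : nat -> bvec k, forall i, A (u i) /\ F (u i) < - INR i.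
  apply: (choice (fun i y => A y /\ F y < - INR i)) => i.
  apply: NNPP => hi; apply: hnot; exists (- INR i) => y hy.
  by apply: Rnot_lt_le => hlt; apply: hi; exists y.
have [phi [x [hphi [hx hlim]]]] := bcompact_cvg_subseq (fun i => proj1 (hu i)).
have [r [hr Hr]] := cF x hx 1 Rlt_0_1.
have [N HN] := hlim r hr; have [N' HN'] := INR_unbounded (1 - F x).
set i := maxn N N'.
have := Hr _ (proj1 (hu (phi i))) (HN i (leq_maxl _ _)); move=> /Rlt_le/Rabs_le_bounds.
have := proj2 (hu (phi i)).
have : INR N' <= INR (phi i).
  by apply: le_INR; apply/leP; apply: leq_trans (leq_maxr N N') (strict_incr_ge hphi i).
lra.
Qed.

Lemma bcompact_argmin F : (exists x, A x) -> bcontinuous_on A F ->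
  exists x, A x /\ forall y, A y -> F x <= F y.
Proof.
move=> [x0 hx0] cF; have [L HL] := bcompact_bounded_below cF.
pose E r := exists y, A y /\ r = - F y.
have [sup [Hub Hlub]] : {m | is_lub E m}.
  apply: completeness; last by exists (- F x0), x0.
  by exists (- L) => r [y [hy ->]]; have := HL y hy; lra.
have Hinf y : A y -> - sup <= F y.
  by move=> hy; have := Hub (- F y) (ex_intro _ y (conj hy erefl)); lra.
have [u hu] : exists u : nat -> bvec k, forall i, A (u i) /\ F (u i) < - sup + / INR i.+1.
  apply: (choice (fun i y => A y /\ F y < - sup + / INR i.+1)) => i; apply: NNPP => hi.
  have hpos : 0 < / INR i.+1 by apply: Rinv_0_lt_compat; apply: lt_0_INR; lia.
  suff : sup <= sup - / INR i.+1 by lra.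
  apply: Hlub => r [y [hy ->]]; apply: Rnot_lt_le => hlt; apply: hi; exists y; split => //; lra.
have [phi [x [hphi [hx hlim]]]] := bcompact_cvg_subseq (fun i => proj1 (hu i)).
exists x; split => // y hy; apply: Rle_trans (Hinf y hy).
apply: le_epsilon => e he.
have [r [hr Hr]] := cF x hx (e / 2) (ltac:(lra)).
have [N HN] := hlim r hr; have [N' HN'] := inv_INR_S_lt (ltac:(lra) : 0 < e / 2).
set i := maxn N N'.
have := Hr _ (proj1 (hu (phi i))) (HN i (leq_maxl _ _)); move=> /Rlt_le/Rabs_le_bounds.
have := proj2 (hu (phi i)).
have := HN' (phi i) (leq_trans (leq_maxr N N') (strict_incr_ge hphi i)).
lra.
Qed.

End Compact.

Unset Implicit Arguments.

Section Gradient.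
Context {n : nat} {m : 'I_n -> nat} {mu : vec n m -> R} {g : vec n m -> vec n m}.
Hypotheses (convmu : vconvex_fun mu) (gradmu : has_gradient mu g).

(* Compare the first-order expansion of mu along [x, y] with the chord, for small steps. *)
Lemma convex_gradient_ineq x y : mu x + vdot (g x) (vdiff y x) <= mu y.
Proof.
set h := vdiff y x; have hh := sqrt_pos (vdot h h); rewrite -/(vnorm h) in hh.
suff H eps : 0 < eps -> vdot (g x) h <= mu y - mu x + eps * (vnorm h + 1).
  suff : vdot (g x) h <= mu y - mu x by lra.
  apply: le_epsilon => e he; have := H (e / (vnorm h + 1)) (ltac:(apply: Rdiv_lt_0_compat; lra)).
  by have -> : e / (vnorm h + 1) * (vnorm h + 1) = e by field; lra.
move=> he; have [del [hdel Hd]] := gradmu x eps he.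
set t := Rmin 1 (del / (2 * (vnorm h + 1))).
have ht : 0 < t <= 1.
  by split; [apply: Rmin_pos; [lra | apply: Rdiv_lt_0_compat; lra] | apply: Rmin_l].
have hth : vnorm (fun s j => t * h s j) < del.
  rewrite vnorm_scale; last lra.
  have := Rmin_r 1 (del / (2 * (vnorm h + 1))); rewrite -/t => htd.
  have hq : del / (2 * (vnorm h + 1)) * (2 * (vnorm h + 1)) = del by field; lra.
  have : 0 < del / (2 * (vnorm h + 1)) by apply: Rdiv_lt_0_compat; lra.
  nra.
have := Hd _ hth; rewrite vnorm_scale ?vdot_scaler; last lra.
move=> /Rabs_le_bounds [Hlow _].
have Hchord : mu (fun s j => x s j + t * h s j) <= t * mu y + (1 - t) * mu x.
  have -> : (fun s j => x s j + t * h s j) = (fun s j => t * y s j + (1 - t) * x s j).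
    apply: functional_extensionality_dep => s; apply: functional_extensionality => j.
    by rewrite /h /vdiff; ring.
  by apply: convmu; lra.
apply: (Rmult_le_reg_l t); first lra.
nra.
Qed.

Lemma convex_gradient_lsc x eps : 0 < eps ->
  exists r, 0 < r /\ forall y, vnorm (vdiff y x) < r -> mu x - eps < mu y.
Proof.
move=> he; set A := vdot (g x) (g x); have hA : 0 <= A by apply: vdot_ge0.
set l := eps / (A + 1); have hl : 0 < l by apply: Rdiv_lt_0_compat; lra.
have hlA : l * A < eps.
  have e : l * (A + 1) = eps by rewrite /l; field; lra.
  nra.
have hr : 0 < sqrt (eps * l) by apply: sqrt_lt_R0; nra.
exists (sqrt (eps * l)); split=> // y /(vnorm_lt_iff _ hr); rewrite sqrt_sqrt; last nra.
move=> hd; have := convex_gradient_ineq x y.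
have := vdot_young (fun s j => -1 * g x s j) (vdiff y x) hl.
have -> : vdot (fun s j => -1 * g x s j) (fun s j => -1 * g x s j) = A.
  by rewrite vdot_scaler vdot_sym vdot_scaler /A; ring.
have -> : vdot (fun s j => -1 * g x s j) (vdiff y x) = - vdot (g x) (vdiff y x).
  by rewrite vdot_sym vdot_scaler vdot_sym; ring.
have : vdot (vdiff y x) (vdiff y x) / l < eps.
  by apply: (Rmult_lt_reg_r l) => //; rewrite /Rdiv Rmult_assoc Rinv_l; lra.
nra.
Qed.

End Gradient.

Lemma is_max_uniq {T : Type} {A : T -> Prop} {F : T -> R} {M M'} :
  is_max A F M -> is_max A F M' -> M = M'.
Proof.
by move=> [[x [hx <-]] hM] [[x' [hx' <-]] hM']; apply: Rle_antisym; [apply: hM' | apply: hM].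
Qed.

Lemma least_nat (P : nat -> Prop) : (exists j, P j) ->
  exists j, P j /\ forall i, (i < j)%N -> ~ P i.
Proof.
move=> [j0 hj0]; apply: NNPP => hnot; suff : forall j, ~ P j by move/(_ j0).
elim/lt_wf_ind => j IH hj; apply: hnot; exists j; split=> // i /ltP; exact: IH.
Qed.

Lemma pow_in01 r j : 0 < r <= 1 -> 0 < r ^ j <= 1.
Proof.
move=> hr; split; first exact: pow_lt (proj1 hr).
by elim: j => [|j IH] /=; [lra | have := pow_lt r j (proj1 hr); nra].
Qed.

Lemma pow_eventually_le r e : 0 < r < 1 -> 0 < e -> exists j, r ^ j <= e.
Proof.
move=> hr he; have [N HN] := pow_lt_1_zero r (ltac:(rewrite Rabs_right; lra)) e he.
exists N; have := HN N (le_n _); rewrite Rabs_right; first lra.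
by apply: Rle_ge; apply: pow_le; lra.
Qed.

Lemma iter_ordS N k (a : 'I_N) : nat_of_ord (iter k (@ordS N) a) = (a + k) %% N.
Proof.
elim: k => [|k IH] /=; first by rewrite addn0 modn_small.
by rewrite IH -addn1 modnDml addn1 addnS.
Qed.

Lemma ordS_iter_reach N (a b : 'I_N) : exists k, (k < N)%N /\ iter k (@ordS N) a = b.
Proof.
have hN : (0 < N)%N by apply: leq_ltn_trans (ltn_ord a).
exists ((b + N - a) %% N); split; first by rewrite ltn_pmod.
apply: val_inj => /=; rewrite iter_ordS modnDmr subnKC.
  by rewrite modnDr modn_small.
exact: leq_trans (ltnW (ltn_ord a)) (leq_addl _ _).
Qed.

Section Problem.
Context {n : nat} (hn : (0 < n)%N) {m : 'I_n -> nat} {W : forall s : 'I_n, bvec (m s) -> Prop}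
  {mu : vec n m -> R} {g : vec n m -> vec n m} {eta : forall s : 'I_n, bvec (m s) -> R}
  {beta theta : R} {delta : nat -> R}.
Hypotheses (Wne : forall s, exists x, W s x) (Wconv : forall s, bconvex_set (W s))
  (Wcomp : forall s, bcompact (W s)) (convmu : vconvex_fun mu) (gradmu : has_gradient mu g)
  (gunif : vunif_cont_on (inW W) g) (conveta : forall s, bconvex_fun (eta s)).

Let f := fobj mu eta.

Lemma in_V_exists w s : exists v, in_V W g eta w s v.
Proof.
have cF := bconvex_continuous_on (A := W s) (bconvex_fun_add_linear (g w s) (conveta s)).
by have [v [hv Hv]] := bcompact_argmin (Wcomp s) (Wne s) cF; exists v.
Qed.

Lemma in_V_gap_max w s v :
  in_V W g eta w s v -> is_max (W s) (gapfun g eta w s) (gapfun g eta w s v).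
Proof.
move=> [hv Hv]; split=> [|u hu]; first by exists v.
by have := Hv u hu; rewrite /gapfun !bdot_subl; lra.
Qed.

Lemma gap_bounded z s : exists M, forall u, W s u -> gapfun g eta z s u <= M.
Proof.
have [v hv] := in_V_exists z s.
by exists (gapfun g eta z s v); apply: (in_V_gap_max z s v hv).2.
Qed.

Lemma f_sub_le_sum_gaps z w (c : 'I_n -> R) : inW W w ->
  (forall s u, W s u -> gapfun g eta z s u <= c s) -> f z - f w <= \sum_(s < n) c s.
Proof.
move=> hw hc; have := convex_gradient_ineq convmu gradmu z w.
have -> : vdot (g z) (vdiff w z) = \sum_(s < n) eta s (z s) - \sum_(s < n) eta s (w s)
    - \sum_(s < n) gapfun g eta z s (w s).
  rewrite -!sumR_sub /vdot; apply: eq_bigr => s _.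
  by rewrite /gapfun /vdiff bdot_subl (bdot_sym (g z s)) bdot_subl; ring.
have := sumR_le (fun s => hc s (w s) (hw s)).
by rewrite /f /fobj; lra.
Qed.

Lemma f_bounded_below : exists L, forall w, inW W w -> L <= f w.
Proof.
pose z : vec n m := fun _ _ => 0.
have [c hc] := choice (fun s M => forall u, W s u -> gapfun g eta z s u <= M) (gap_bounded z).
exists (f z - \sum_(s < n) c s) => w hw.
by have := f_sub_le_sum_gaps z w c hw hc; lra.
Qed.

Lemma W_bounded : exists B, 0 <= B /\ forall s x, W s x -> bdot x x <= B.
Proof.
have [B hB] := choice (fun s B => 0 <= B /\ forall x, W s x -> bdot x x <= B)
  (fun s => bcompact_bounded (Wcomp s)).
exists (\sum_(s < n) B s); split; first by apply: sumR_ge0 => s; case: (hB s).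
move=> s x hx; apply: Rle_trans (proj2 (hB s) x hx) _.
by apply: sumR_term_le => i; case: (hB i).
Qed.

Definition block_dir (w : vec n m) (s : 'I_n) (v : bvec (m s)) (p : vec n m) : Prop :=
  p s = (fun j => v j - w s j) /\ forall i, i <> s -> p i = (fun _ => 0).

Definition block_dir_vec (w : vec n m) (s : 'I_n) (v : bvec (m s)) : vec n m :=
  dfwith (fun i (_ : 'I_(m i)) => 0) (fun j => v j - w s j).

Lemma block_dir_vecP w s v : block_dir w s v (block_dir_vec w s v).
Proof.
split; first by rewrite /block_dir_vec dfwith_in.
by move=> i hi; rewrite /block_dir_vec dfwith_out //; apply/eqP => e; apply: hi.
Qed.

Definition addv (w p : vec n m) (t : R) : vec n m := fun i j => w i j + t * p i j.

Lemma addv_inW w s v p t : inW W w -> W s v -> block_dir w s v p -> 0 <= t <= 1 ->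
  inW W (addv w p t).
Proof.
move=> hw hv [hps hpo] ht i; rewrite /addv.
case: (eqVneq i s) => [->|hne].
  rewrite hps (_ : (fun j => w s j + t * (v j - w s j)) = (fun j => t * v j + (1 - t) * w s j)).
    exact: Wconv.
  by apply: functional_extensionality => j; ring.
rewrite hpo; last by move=> e; rewrite e eqxx in hne.
by rewrite (_ : (fun j => w i j + t * 0) = w i) //; apply: functional_extensionality => j; ring.
Qed.

Lemma block_dir_sq_le B w s v p : (forall s x, W s x -> bdot x x <= B) ->
  inW W w -> W s v -> block_dir w s v p -> vdot p p <= 4 * B.
Proof.
move=> hB hw hv [hps hpo].
rewrite (vdot_single p (s := s)) => [|i /hpo //]; rewrite hps.
by have := bdist2_le_sq v (w s); have := hB s v hv; have := hB s (w s) (hw s); rewrite /bdist2; lra.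
Qed.

Lemma f_addv_le w s v p t : block_dir w s v p -> 0 <= t <= 1 ->
  f (addv w p t) - f w <= t * (vdot (vdiff (g (addv w p t)) (g w)) p - gapfun g eta w s v).
Proof.
move=> [hps hpo] ht; set y := addv w p t.
have hmu : mu y - mu w <= t * vdot (g y) p.
  have := convex_gradient_ineq convmu gradmu y w.
  rewrite (@vdot_ext n m (g y) (vdiff w y) (g y) (fun i j => - t * p i j)) // => [|i j].
    by rewrite vdot_scaler; lra.
  by rewrite /vdiff /y /addv; ring.
have hsplit : vdot (g y) p = vdot (g w) p + vdot (vdiff (g y) (g w)) p.
  rewrite !(vdot_sym _ p) -(Rmult_1_l (vdot p (g w))) -(Rmult_1_l (vdot p (vdiff _ _))).
  by rewrite -vdot_linr; apply: vdot_ext => // i j; rewrite /vdiff; ring.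
have hgw : vdot (g w) p = - gapfun g eta w s v + eta s (w s) - eta s v.
  rewrite (vdot_single _ (s := s)) => [|i /hpo //].
  by rewrite bdot_sym hps /gapfun !bdot_subl; ring.
have heta : eta s (y s) <= t * eta s v + (1 - t) * eta s (w s).
  by apply: bconvex_funP => // j; rewrite /y /addv hps; ring.
have hsum : \sum_(i < n) eta i (y i) = \sum_(i < n) eta i (w i) - eta s (w s) + eta s (y s).
  rewrite (bigD1 s) //= [in RHS](bigD1 s) //= (eq_bigr (fun i => eta i (w i))); first ring.
  move=> i /eqP hi; congr (eta i); rewrite /y /addv hpo //.
  by apply: functional_extensionality => j; ring.
by rewrite /f /fobj hsum; nra.
Qed.

Lemma cpl_step_cases {w s d l w' s' d' l'} :
  cpl_step hn W mu g eta beta theta delta w s d l w' s' d' l' ->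
  (exists v p j, in_V W g eta w s v /\ block_dir w s v p /\ delta l <= gapfun g eta w s v /\
     f (addv w p (theta ^ j)) <= f w - beta * theta ^ j * gapfun g eta w s v /\
     (forall i, (i < j)%N ->
        f w - beta * theta ^ i * gapfun g eta w s v < f (addv w p (theta ^ i))) /\
     w' = addv w p (theta ^ j) /\ d' = 0%N /\ l' = l)
  \/ ((forall u, W s u -> gapfun g eta w s u < delta l) /\ w' = w /\
     ((d.+1 = n /\ d' = 0%N /\ l' = l.+1) \/ (d.+1 <> n /\ s' = ordS s /\ d' = d.+1 /\ l' = l))).
Proof.
case=> [[v [phi [p [j [hV [hmax [hdp [hps [hpo [harm [hfail [-> [_ [-> ->]]]]]]]]]]]]]]
      | [phi [hmax [hlt hcase]]]].
- rewrite (is_max_uniq hmax (in_V_gap_max w s v hV)) in hdp harm hfail.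
  by left; exists v, p, j.
- right; split; first by move=> u hu; have := hmax.2 u hu; lra.
  by case: hcase => [[? [-> [_ [-> ->]]]] | [? [-> [-> [-> ->]]]]]; split=> //; [left | right].
Qed.

Lemma inW_diagonal_subseq (z : nat -> vec n m) : (forall l, inW W (z l)) ->
  forall k, (k <= n)%N -> exists phi : nat -> nat, (forall i, (phi i < phi i.+1)%N) /\
    forall s : 'I_n, (s < k)%N -> exists xs, bconverges (fun i => z (phi i) s) xs.
Proof.
move=> zW; elim=> [|k IH] hk; first by exists id; split=> // s; rewrite ltn0.
have [phi [hphi Hphi]] := IH (ltnW hk); set sk := Ordinal hk.
have [psi [y [hpsi [_ Hy]]]] := bcompact_cvg_subseq (Wcomp sk) (fun i => zW (phi i) sk).
exists (fun i => phi (psi i)); split.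
  by move=> i; apply: (homo_ltn ltn_trans hphi); apply: hpsi.
move=> s; rewrite ltnS leq_eqVlt => /orP [/eqP hs | hs].
  have -> : s = sk by apply: val_inj.
  by exists y.
have [xs Hxs] := Hphi s hs; exists xs => eps /Hxs [N HN].
by exists N => i hi; apply: HN; exact: leq_trans hi (strict_incr_ge hpsi i).
Qed.

Lemma inW_cluster_exists (z : nat -> vec n m) : (forall l, inW W (z l)) ->
  exists zb, cluster_point z zb.
Proof.
move=> zW; have [phi [hphi Hphi]] := inW_diagonal_subseq z zW n (leqnn n).
have [zb Hzb] := non_dep_dep_functional_choice (@choice) _
  (fun s xs => bconverges (fun i => z (phi i) s) xs) (fun s => Hphi s (ltn_ord s)).
exists zb => eps he N.
set e2 := eps * eps / (INR n + 1); have hn0 := pos_INR n.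
have he2 : 0 < e2 by apply: Rdiv_lt_0_compat; [apply: Rmult_lt_0_compat | lra].
have [Ns HNs] := choice (fun s N => forall i, (N <= i)%N -> bdist2 (z (phi i) s) (zb s) < e2)
  (fun s => Hzb s e2 he2).
set i := maxn N (\max_(s < n) Ns s).
exists (phi i); split; first exact: leq_trans (leq_maxl N _) (strict_incr_ge hphi i).
apply/vnorm_lt_iff => //; apply: Rle_lt_trans (_ : _ <= INR n * e2) _.
  apply: sumR_le_const => s; apply: Rlt_le; apply: HNs.
  exact: leq_trans (leq_bigmax s) (leq_maxr _ _).
have <- : e2 * (INR n + 1) = eps * eps by rewrite /e2; field; lra.
by rewrite Rmult_comm; apply: Rmult_lt_compat_l => //; lra.
Qed.

Lemma cluster_inW (z : nat -> vec n m) zb : (forall l, inW W (z l)) -> cluster_point z zb ->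
  inW W zb.
Proof.
move=> zW hzb s; apply: (bcompact_closed (Wcomp s)) => eps he.
have hse := sqrt_lt_R0 _ he.
have [k [_ /(vnorm_lt_iff _ hse) hk]] := hzb (sqrt eps) hse 0%N.
exists (z k s); split; first exact: zW.
by apply: Rle_lt_trans (vdot_block_le (vdiff (z k) zb) s) _; rewrite sqrt_sqrt in hk; lra.
Qed.

Lemma f_lsc x eps : 0 < eps ->
  exists r, 0 < r /\ forall y, vnorm (vdiff y x) < r -> f x - eps < f y.
Proof.
move=> he; have [r1 [hr1 Hr1]] := convex_gradient_lsc convmu gradmu x (eps / 2) (ltac:(lra)).
set e' := eps / (2 * (INR n + 1)); have hn0 := pos_INR n.
have he' : 0 < e' by apply: Rdiv_lt_0_compat; lra.
have [rs Hrs] := choice (fun s r => 0 < r /\ forall y, bdist2 y (x s) < r ->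
  Rabs (eta s y - eta s (x s)) < e') (fun s => bconvex_continuous (conveta s) (x s) he').
have [r2 [hr2 Hr2]] := pos_lower_bound (fun s => proj1 (Hrs s)).
set r := Rmin r1 (Rmin 1 r2).
have hr : 0 < r by apply: Rmin_pos => //; apply: Rmin_pos; lra.
have hrr : r * r <= r2.
  have := Rmin_r r1 (Rmin 1 r2); have := Rmin_l 1 r2; have := Rmin_r 1 r2; rewrite -/r.
  nra.
exists r; split=> // y hy.
have hmu := Hr1 y (Rlt_le_trans _ _ _ hy (Rmin_l _ _)).
have heta s : eta s (x s) - eta s (y s) <= e'.
  have hb := vdot_block_le (vdiff y x) s.
  have hyx := proj1 (vnorm_lt_iff _ hr) hy; have hrs := Hr2 s.
  have /Rlt_le/Rabs_le_bounds : Rabs (eta s (y s) - eta s (x s)) < e'.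
    by apply: (proj2 (Hrs s)); rewrite /bdist2; rewrite /vdiff in hb hyx; lra.
  lra.
have := sumR_le_const heta; rewrite sumR_sub.
have : INR n * e' < eps / 2.
  have e : e' * (2 * (INR n + 1)) = eps by rewrite /e'; field; lra.
  nra.
by rewrite /f /fobj; lra.
Qed.

Section ApproximateMinimizers.
Variables (z : nat -> vec n m) (a : nat -> R).
Hypotheses (zW : forall l, inW W (z l)) (acv : Un_cv a 0)
  (zapprox : forall l, (1 <= l)%N -> forall w, inW W w -> f (z l) - f w <= a l).

Lemma cluster_optimal zb : cluster_point z zb -> inW W zb /\ forall w, inW W w -> f zb <= f w.
Proof.
move=> hzb; split=> [|w hw]; first exact: cluster_inW z zb zW hzb.
apply: le_epsilon => e he.
have [r [hr Hr]] := f_lsc zb (e / 2) (ltac:(lra)).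
have [N HN] := acv (e / 2) (ltac:(lra)).
have [k [hk hzk]] := hzb r hr (maxn N 1).
have := Hr _ hzk; have := zapprox k (leq_trans (leq_maxr _ _) hk) w hw.
have := HN k (ltac:(apply/leP; exact: leq_trans (leq_maxl _ _) hk)).
by rewrite /R_dist Rminus_0_r => /Rlt_le/Rabs_le_bounds; lra.
Qed.

Lemma approx_values_cvg zb : inW W zb -> (forall w, inW W w -> f zb <= f w) ->
  Un_cv (fun l => f (z l)) (f zb).
Proof.
move=> zbW zbmin e he; have [N HN] := acv e he.
exists (maxn N 1) => l /leP hl.
have := HN l (ltac:(apply/leP; exact: leq_trans (leq_maxl _ _) hl)).
rewrite /R_dist Rminus_0_r => /Rabs_def2 [hal _].
have := zapprox l (leq_trans (leq_maxr _ _) hl) zb zbW; have := zbmin _ (zW l).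
by move=> h1 h2; rewrite Rabs_right; lra.
Qed.

End ApproximateMinimizers.

Section Method.
Hypotheses (hbeta : 0 < beta < 1) (htheta : 0 < theta < 1).

(* The step size comes from the uniform continuity of g on W, which makes the gradient
   variation term of [f_addv_le] at most (1 - beta) del. *)
Lemma armijo_uniform del : 0 < del -> exists ts, 0 < ts <= 1 /\
  forall w s v p t, inW W w -> W s v -> block_dir w s v p -> del <= gapfun g eta w s v ->
  0 < t <= ts -> f (addv w p t) <= f w - beta * t * gapfun g eta w s v.
Proof.
move=> hdel; have [B [hB0 hB]] := W_bounded.
set P := 4 * B + 1; set c := (1 - beta) * del.
have hP : 0 < P by rewrite /P; lra.
have hc : 0 < c by rewrite /c; nra.
set eps := Rmin 1 (c * c / P).
have heps : 0 < eps by apply: Rmin_pos; [lra | apply: Rdiv_lt_0_compat; nra].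
have [rho [hrho Hrho]] := gunif eps heps.
have hsP := sqrt_pos P.
set ts := Rmin 1 (rho / (sqrt P + 1)).
have hts : 0 < ts <= 1.
  by split; [apply: Rmin_pos; [lra | apply: Rdiv_lt_0_compat; lra] | apply: Rmin_l].
exists ts; split=> // w s v p t hw hv hp hgap ht.
set y := addv w p t.
have hpp : vdot p p <= 4 * B := block_dir_sq_le B w s v p hB hw hv hp.
have hdist : vnorm (vdiff y w) < rho.
  have -> : vnorm (vdiff y w) = t * vnorm p.
    rewrite -vnorm_scale; last lra.
    by rewrite /vnorm; congr sqrt; apply: vdot_ext => i j; rewrite /vdiff /y /addv; ring.
  have hvp : vnorm p <= sqrt P by apply: sqrt_le_1_alt; rewrite /P; lra.
  have := sqrt_pos (vdot p p); rewrite -/(vnorm p) => hvp0.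
  have := Rmin_r 1 (rho / (sqrt P + 1)); rewrite -/ts => hts2.
  have hq : rho / (sqrt P + 1) * (sqrt P + 1) = rho by field; lra.
  have : 0 < rho / (sqrt P + 1) by apply: Rdiv_lt_0_compat; lra.
  nra.
have hy : inW W y by apply: (addv_inW w s v p t hw hv hp); lra.
have hgrad : vdot (vdiff (g y) (g w)) p <= c.
  apply: (vdot_le_of_sq_le hc hP); last by rewrite /P; lra.
  have := proj1 (vnorm_lt_iff _ heps) (Hrho w y hw hy hdist).
  have := Rmin_l 1 (c * c / P); have := Rmin_r 1 (c * c / P); rewrite -/eps.
  nra.
have := f_addv_le w s v p t hp (ltac:(lra)); rewrite -/y.
have : c <= (1 - beta) * gapfun g eta w s v by rewrite /c; apply: Rmult_le_compat_l; lra.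
nra.
Qed.

Lemma cpl_step_exists w s d l : inW W w -> 0 < delta l ->
  exists w' s' d' l', cpl_step hn W mu g eta beta theta delta w s d l w' s' d' l'.
Proof.
move=> hw hdl; have [v hV] := in_V_exists w s.
have hmax := in_V_gap_max w s v hV; set phi := gapfun g eta w s v in hmax.
case: (Rle_lt_dec (delta l) phi) => hcase.
- have [hps hpo] := block_dir_vecP w s v; set p := block_dir_vec w s v in hps hpo.
  have [ts [hts Hts]] := armijo_uniform (delta l) hdl.
  have [j0 hj0] := pow_eventually_le theta ts htheta (proj1 hts).
  have [j [hj hmin]] :=
    least_nat (fun j => f (addv w p (theta ^ j)) <= f w - beta * theta ^ j * phi)
    (ex_intro _ j0 (Hts w s v p (theta ^ j0) hw hV.1 (conj hps hpo) hcase
       (conj (pow_lt _ _ (proj1 htheta)) hj0))).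
  exists (addv w p (theta ^ j)), (ordS s), 0%N, l; left.
  exists v, phi, p, j; do 6 split=> //.
  by split=> // j' hj'; apply: Rnot_le_lt; apply: hmin.
- case: (eqVneq d.+1 n) => [e|ne].
  + by exists w, (Ordinal hn), 0%N, l.+1; right; exists phi; do 2 split=> //; left.
  + exists w, (ordS s), d.+1, l; right; exists phi; do 2 split=> //; right.
    by split=> // e; rewrite e eqxx in ne.
Qed.

Section Run.
Variables (ws : nat -> vec n m) (ss : nat -> 'I_n) (ds ls : nat -> nat).
Hypotheses (ws0 : inW W (ws 0%N)) (ds0 : ds 0%N = 0%N) (ls0 : ls 0%N = 1%N)
  (run : forall t, cpl_step hn W mu g eta beta theta delta
     (ws t) (ss t) (ds t) (ls t) (ws t.+1) (ss t.+1) (ds t.+1) (ls t.+1))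
  (delta_pos : forall l, (1 <= l)%N -> 0 < delta l).

Lemma run_invariant t : inW W (ws t) /\ (1 <= ls t)%N /\ (ds t < n)%N.
Proof.
elim: t => [|t [hw [hl hd]]]; first by rewrite ds0 ls0.
case: (cpl_step_cases (run t)) =>
  [[v [p [j [hV [hp [_ [_ [_ [-> [-> ->]]]]]]]]]] | [_ [-> [[_ [-> ->]] | [hne [_ [-> ->]]]]]]].
- split=> //; apply: (addv_inW _ _ _ _ _ hw hV.1 hp); have := pow_in01 theta j; lra.
- by [].
- by split=> //; split=> //; rewrite ltn_neqAle; apply/andP; split; [apply/eqP|].
Qed.

Lemma outer_index_step t : ls t.+1 = ls t \/ ls t.+1 = (ls t).+1.
Proof.
by case: (cpl_step_cases (run t)) =>
  [[v [p [j [_ [_ [_ [_ [_ [_ [_ ->]]]]]]]]]] | [_ [_ [[_ [_ ->]] | [_ [_ [_ ->]]]]]]];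
  [left | right | left].
Qed.

(* Invariant of the idle checks: the ds t blocks preceding ss t were checked at ws t. *)
Lemma checked_gaps_small t s : (exists i, (i < ds t)%N /\ iter i.+1 (@ordS n) s = ss t) ->
  forall u, W s u -> gapfun g eta (ws t) s u < delta (ls t).
Proof.
elim: t s => [|t IH] s [i [hi hit]]; first by rewrite ds0 in hi.
case: (cpl_step_cases (run t)) =>
  [[v [p [j [_ [_ [_ [_ [_ [_ [hd _]]]]]]]]]] | [hgap [-> [[_ [hd _]] | [_ [hs [hd ->]]]]]]];
  try by rewrite hd in hi.
rewrite hs /= in hit; move: (ordS_inj hit) => {}hit.
case: i hi hit => [|i] hi /= hit; first by rewrite hit.
by apply: IH; exists i; rewrite hd in hi.
Qed.

Lemma restart_gaps_small t : ls t.+1 = (ls t).+1 ->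
  forall s u, W s u -> gapfun g eta (ws t) s u < delta (ls t).
Proof.
move=> hrest s; case: (cpl_step_cases (run t)) =>
  [[v [p [j [_ [_ [_ [_ [_ [_ [_ hl]]]]]]]]]] | [hgap [_ [[hd _] | [_ [_ [_ hl]]]]]]];
  try by rewrite hl in hrest; have := n_Sn (ls t).
have [[|i] [hi hit]] := ordS_iter_reach n s (ss t); first by rewrite /= in hit; rewrite hit.
by apply: checked_gaps_small; exists i; rewrite -ltnS hd.
Qed.

Lemma restart_near_optimal t : ls t.+1 = (ls t).+1 ->
  forall w, inW W w -> f (ws t) - f w <= INR n * delta (ls t).
Proof.
move=> hrest w hw; rewrite -sumR_const.
by apply: f_sub_le_sum_gaps => // s u hu; apply: Rlt_le; apply: restart_gaps_small.
Qed.

Lemma step_descent_or_idle t ts : 0 < ts <= 1 ->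
  (forall w s v p r, inW W w -> W s v -> block_dir w s v p ->
     delta (ls t) <= gapfun g eta w s v -> 0 < r <= ts ->
     f (addv w p r) <= f w - beta * r * gapfun g eta w s v) ->
  (f (ws t.+1) <= f (ws t) - beta * theta * ts * delta (ls t) /\ ls t.+1 = ls t)
  \/ ls t.+1 = (ls t).+1
  \/ (ws t.+1 = ws t /\ ds t.+1 = (ds t).+1 /\ ls t.+1 = ls t).
Proof.
move=> hts Hts; have [hw [hl _]] := run_invariant t; have hdl := delta_pos _ hl.
have htheta1 : 0 < theta <= 1 by lra.
case: (cpl_step_cases (run t)) =>
  [[v [p [j [hV [hp [hdp [harm [hfail [-> [_ ->]]]]]]]]]]
  | [_ [-> [[_ [_ ->]] | [_ [_ [-> ->]]]]]]]; [left; split=> // | by right; left | by right; right].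
(* The step before the accepted one was rejected, so it exceeded ts. *)
have hth : theta * ts <= theta ^ j.
  case: j harm hfail => [|j] harm hfail /=; first nra.
  suff : ts < theta ^ j by nra.
  apply: Rnot_le_lt => hle; have := hfail j (ltnSn j).
  have := Hts _ _ _ _ _ hw hV.1 hp hdp (conj (proj1 (pow_in01 theta j htheta1)) hle).
  lra.
have : theta * ts * delta (ls t) <= theta ^ j * gapfun g eta (ws t) (ss t) v.
  by apply: Rmult_le_compat => //; nra.
nra.
Qed.

(* Without a restart, at most n - 1 idle checks can separate two descent steps. *)
Lemma descent_without_restart t0 L ts : 0 < ts <= 1 -> (forall t, (t0 <= t)%N -> ls t = L) ->
  (forall w s v p r, inW W w -> W s v -> block_dir w s v p ->
     delta L <= gapfun g eta w s v -> 0 < r <= ts ->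
     f (addv w p r) <= f w - beta * r * gapfun g eta w s v) ->
  forall t, (t0 <= t)%N ->
  exists t', (t < t')%N /\ f (ws t') <= f (ws t) - beta * theta * ts * delta L.
Proof.
move=> hts stay Hts t ht.
have claim k : (exists t', (t < t')%N /\ f (ws t') <= f (ws t) - beta * theta * ts * delta L)
    \/ (ds (t + k) = (ds t + k)%N /\ ws (t + k) = ws t).
  elim: k => [|k [hdesc|[hd hw]]]; [by right; rewrite !addn0 | by left |].
  have htk : (t0 <= t + k)%N by apply: leq_trans ht (leq_addr _ _).
  have Hts' := Hts; rewrite -(stay _ htk) in Hts'.
  case: (step_descent_or_idle (t + k) ts hts Hts') => [[hf _] | [hr | [hw' [hd' _]]]].
  - by left; exists (t + k).+1; rewrite ltnS leq_addr -hw -(stay _ htk).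
  - have := stay _ (leq_trans htk (leqnSn _)); rewrite hr (stay _ htk).
    by move/esym/n_Sn.
  - by right; rewrite addnS hd' hd hw' hw addnS.
case: (claim n) => [//|[hd _]].
by have := (run_invariant (t + n)).2.2; rewrite hd ltnNge leq_addl.
Qed.

Lemma restart_eventually t0 : exists t, (t0 <= t)%N /\ ls t = ls t0 /\ ls t.+1 = (ls t0).+1.
Proof.
apply: NNPP => hnot; set L := ls t0.
have stay_from k : ls (t0 + k)%N = L.
  elim: k => [|k IH]; first by rewrite addn0.
  case: (outer_index_step (t0 + k)) => h; first by rewrite addnS h IH.
  by exfalso; apply: hnot; exists (t0 + k)%N; rewrite leq_addr h IH.
have stay t : (t0 <= t)%N -> ls t = L by move=> /subnKC <-.
have hL : (1 <= L)%N := (run_invariant t0).2.1.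
have [ts [hts Hts]] := armijo_uniform (delta L) (delta_pos _ hL).
set c := beta * theta * ts * delta L.
have hc : 0 < c.
  by have := delta_pos _ hL; rewrite /c; do 3 (apply: Rmult_lt_0_compat; try lra).
have descend := descent_without_restart t0 L ts hts stay Hts.
have decrease K : exists t, (t0 <= t)%N /\ f (ws t) <= f (ws t0) - INR K * c.
  elim: K => [|K [t [ht hf]]]; first by exists t0; split=> //=; lra.
  have [t' [ht' hf']] := descend t ht.
  by exists t'; split; [exact: leq_trans ht (ltnW ht') | move: hf'; rewrite -/c S_INR; lra].
have [L0 HL0] := f_bounded_below.
have [K HK] := INR_unbounded ((f (ws t0) - L0) / c).
have [t [_ hf]] := decrease K.
have := HL0 _ (run_invariant t).1.
have : (f (ws t0) - L0) / c * c = f (ws t0) - L0 by field; lra.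
have : (f (ws t0) - L0) / c * c < INR K * c by apply: Rmult_lt_compat_r.
lra.
Qed.

Lemma outer_iteration_restarts l : (1 <= l)%N -> exists t, ls t = l /\ ls t.+1 = l.+1.
Proof.
elim: l => [//|l IH] _; case: (posnP l) => [->|lpos].
  by have [t [_ h]] := restart_eventually 0; rewrite ls0 in h; exists t.
have [t [_ h2]] := IH lpos.
by have [t' [_ h]] := restart_eventually t.+1; rewrite h2 in h; exists t'.
Qed.

Lemma restart_points (z : nat -> vec n m) : (forall t, ls t.+1 = (ls t).+1 -> z (ls t) = ws t) ->
  forall l, (1 <= l)%N ->
  inW W (z l) /\ forall w, inW W w -> f (z l) - f w <= INR n * delta l.
Proof.
move=> hz l hl; have [t [<- hrest]] := outer_iteration_restarts l hl.
rewrite hz; last by rewrite hrest.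
by split; [exact: (run_invariant t).1 | exact: restart_near_optimal].
Qed.

End Run.

End Method.

End Problem.

Lemma Un_cv_scal0 c (u : nat -> R) : Un_cv u 0 -> Un_cv (fun l => c * u l) 0.
Proof.
move=> hu; rewrite -(Rmult_0_r c); apply: CV_mult => // e he.
by exists 0%nat => l _; rewrite /R_dist Rminus_diag Rabs_R0.
Qed.

Theorem proposition3p1 (n : nat) (hn : (0 < n)%N) (m : 'I_n -> nat)
  (W : forall s : 'I_n, bvec (m s) -> Prop)
  (mu : vec n m -> R) (g : vec n m -> vec n m)
  (eta : forall s : 'I_n, bvec (m s) -> R)
  (z0 : vec n m) (beta theta : R) (delta : nat -> R) :
  (forall s, exists x, W s x) ->
  (forall s, bconvex_set (W s)) ->
  (forall s, bcompact (W s)) ->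
  vconvex_fun mu -> has_gradient mu g -> vcontinuous g ->
  vunif_cont_on (inW W) g ->
  (forall s, bconvex_fun (eta s)) ->
  inW W z0 -> 0 < beta < 1 -> 0 < theta < 1 ->
  (forall l, (1 <= l)%N -> 0 < delta l) ->
  (forall l, (1 <= l)%N -> delta l.+1 <= delta l) ->
  Un_cv delta 0 ->
  (* the method can always be carried out (Step 1 and the line search of Step 4 succeed) *)
  (forall (w : vec n m) (s : 'I_n) (d l : nat), inW W w -> (1 <= l)%N ->
     exists w' s' d' l', cpl_step hn W mu g eta beta theta delta w s d l w' s' d' l') /\
  (* every run of the method *)
  (forall (ws : nat -> vec n m) (ss : nat -> 'I_n) (ds ls : nat -> nat),
     ws 0%N = z0 -> ss 0%N = Ordinal hn -> ds 0%N = 0%N -> ls 0%N = 1%N ->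
     (forall t, cpl_step hn W mu g eta beta theta delta
                  (ws t) (ss t) (ds t) (ls t) (ws t.+1) (ss t.+1) (ds t.+1) (ls t.+1)) ->
     (* (i) every outer iteration l ends with a restart after finitely many steps *)
     (forall l, (1 <= l)%N -> exists t, ls t = l /\ ls t.+1 = l.+1) /\
     (* (ii) properties of the restart points z^l *)
     (forall z : nat -> vec n m, z 0%N = z0 ->
        (forall t, ls t.+1 = (ls t).+1 -> z (ls t) = ws t) ->
        (exists zb, cluster_point z zb) /\
        (forall zb, cluster_point z zb ->
           inW W zb /\ forall w, inW W w -> fobj mu eta zb <= fobj mu eta w) /\
        (exists fstar, is_min (inW W) (fobj mu eta) fstar /\
                       Un_cv (fun l => fobj mu eta (z l)) fstar))).
Proof.
move=> Wne Wconv Wcomp convmu gradmu _ gunif conveta z0W hbeta htheta dpos _ dcv.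
split=> [w s d l hw hl | ws ss ds ls ws0 _ ds0 ls0 run].
  exact: (cpl_step_exists hn Wne Wconv Wcomp convmu gradmu gunif conveta hbeta htheta
    w s d l hw (dpos l hl)).
rewrite -ws0 in z0W.
have restarts := outer_iteration_restarts hn Wne Wconv Wcomp convmu gradmu gunif conveta
  hbeta htheta ws ss ds ls z0W ds0 ls0 run dpos.
split=> // z z0e zrestart.
have zprops := restart_points hn Wne Wconv Wcomp convmu gradmu gunif conveta hbeta htheta
  ws ss ds ls z0W ds0 ls0 run dpos z zrestart.
have zW l : inW W (z l) by case: l => [|l]; [rewrite z0e -ws0 | exact: (zprops l.+1 _).1].
have zapprox l hl := (zprops l hl).2.
have acv := Un_cv_scal0 (INR n) delta dcv.
have [zb hzb] := inW_cluster_exists Wcomp z zW.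
have optimal := cluster_optimal Wcomp convmu gradmu conveta z _ zW acv zapprox.
split; first by exists zb.
split=> //; have [zbW zbmin] := optimal zb hzb.
exists (fobj mu eta zb); split; first by split; [exists zb | exact: zbmin].
exact: (approx_values_cvg z _ zW acv zapprox zb zbW zbmin).
Qed.
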